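(* Let $\mathcal{S}$ be the ZCA-cor or the Cholesky whitening process, and let $\mathcal{D}$ be a Zolotarev ideal divergence. Then $\mathcal{D}_\mathcal{S}$ restricted to $\mathcal{P}_{\mathbf I}(\mathbb{R}^n)$ satisfies $$\mathcal{D}_\mathcal{S}(X+Z,Y+W)\le\mathcal{D}_\mathcal{S}(X,Y)+\mathcal{D}_\mathcal{S}(Z,W)$$ for all random vectors $X,Y,Z,W$ with identity covariance such that $X$ and $Z$ are independent and $Y$ and $W$ are independent.
   Context: $\mathcal{P}_{\mathbf I}(\mathbb{R}^n)$ is the set of probability measures on $\mathbb{R}^n$ with identity covariance; random vectors are identified with their laws. A linear whitening process maps $X$ (with invertible covariance $\Sigma$) to $W_XX$. Cholesky whitening: $W_X=L^T$, where $L$ is the unique lower triangular matrix with positive diagonal such that $LL^T=\Sigma^{-1}$. ZCA-cor whitening: $W_X=P^{-1/2}V^{-1/2}$, $P$ the correlation matrix of $X$, $V=\mathrm{diag}(\mathrm{Var}(X_1),\dots,\mathrm{Var}(X_n))$, with the square root chosen so that $W_X=\mathbf I$ whenever $X$ has identity covariance (in particular the square root of $\mathbf I$ is $\mathbf I$). $\mathcal{D}_\mathcal{S}(X,Y)=\mathcal{D}(\mathcal{S}(X),\mathcal{S}(Y))$. A divergence $\mathcal{D}$ is Zolotarev ideal if (i) $\mathcal{D}(X+Z,Y+W)\le\mathcal{D}(X,Y)+\mathcal{D}(Z,W)$ whenever $Z$ is independent of $X$ and $W$ is independent of $Y$, and (ii) $\mathcal{D}(cX,cY)=|c|\mathcal{D}(X,Y)$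 for all $X,Y$ and $c\in\mathbb{R}$. *)

From HB Require Import structures.
From mathcomp Require Import all_boot all_order all_algebra.
From mathcomp Require Import all_classical all_reals all_analysis.
Set Implicit Arguments. Unset Strict Implicit. Unset Printing Implicit Defensive.
Import Order.TTheory GRing.Theory Num.Theory.
Import numFieldNormedType.Exports.
Local Open Scope classical_set_scope.
Local Open Scope ring_scope.

(* R^n, represented by row vectors 'rV[R]_n, with its Borel sigma-algebra
   (generated by the open sets of the product topology). *)
Definition Rn (R : realType) (n : nat) :=
  g_sigma_algebraType (@open 'rV[R]_n).

Definition law d (Omega : measurableType d) (R : realType) (n : nat)
  (P : probability Omega R) (X : Omega -> Rn R n) : set (Rn R n) -> \bar R :=
  pushforward P X.

Definition vadd (R : realType) (n : nat) (x y : Rn R n) : Rn R n :=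
  (x : 'rV[R]_n) + (y : 'rV[R]_n).
Definition vscale (R : realType) (n : nat) (c : R) (x : Rn R n) : Rn R n :=
  c *: (x : 'rV[R]_n).

Definition indep d (Omega : measurableType d) (R : realType) (n : nat)
  (P : probability Omega R) (X Z : Omega -> Rn R n) : Prop :=
  forall A B : set (Rn R n), measurable A -> measurable B ->
    P (X @^-1` A `&` Z @^-1` B) = (P (X @^-1` A) * P (Z @^-1` B))%E.

Definition Rexp (R : realType) (n : nat) (mu : set (Rn R n) -> \bar R)
  (f : Rn R n -> R) : R := fine (\int[mu]_x (f x)%:E)%E.

Definition coord (R : realType) (n : nat) (i : 'I_n) (x : Rn R n) : R :=
  (x : 'rV[R]_n) ord0 i.

Definition covmx (R : realType) (n : nat) (mu : set (Rn R n) -> \bar R)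
  : 'M[R]_n :=
  \matrix_(i, j) (Rexp mu (fun x => coord i x * coord j x)
                  - Rexp mu (coord i) * Rexp mu (coord j)).

Definition identity_cov (R : realType) (n : nat)
  (mu : set (Rn R n) -> \bar R) : Prop :=
  (forall i : 'I_n, mu.-integrable setT (fun x => ((coord i x) ^+ 2)%:E))
  /\ covmx mu = 1%:M.

(* linear map x |-> A x (x viewed as a column vector) *)
Definition linmap (R : realType) (n : nat) (A : 'M[R]_n) (x : Rn R n)
  : Rn R n := (x : 'rV[R]_n) *m A^T.

(* the whitened law S(mu) = law of W_X X, where the whitening matrix
   W_X = S (Cov X) is a function of the covariance matrix *)
Definition whiten (R : realType) (n : nat) (S : 'M[R]_n -> 'M[R]_n)
  (mu : set (Rn R n) -> \bar R) : set (Rn R n) -> \bar R :=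
  pushforward mu (linmap (S (covmx mu))).

Definition DS (R : realType) (n : nat) (S : 'M[R]_n -> 'M[R]_n)
  (D : (set (Rn R n) -> \bar R) -> (set (Rn R n) -> \bar R) -> \bar R)
  (mu nu : set (Rn R n) -> \bar R) : \bar R :=
  D (whiten S mu) (whiten S nu).

Definition lower_triangular (R : realType) (n : nat) (L : 'M[R]_n) : Prop :=
  forall i j : 'I_n, (i < j)%N -> L i j = 0.

Definition is_chol_factor (R : realType) (n : nat) (Sigma L : 'M[R]_n)
  : Prop :=
  lower_triangular L /\ (forall i, 0 < L i i) /\ L *m L^T = invmx Sigma.

(* W_X = L^T, L the (unique) Cholesky-type factor of Sigma^{-1} *)
Definition cholesky_W (R : realType) (n : nat) (Sigma : 'M[R]_n) : 'M[R]_n :=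
  (xget 0 [set L | is_chol_factor Sigma L])^T.

Definition psd (R : realType) (n : nat) (A : 'M[R]_n) : Prop :=
  forall v : 'rV[R]_n, 0 <= (v *m A *m v^T) ord0 ord0.

(* principal square root: the unique symmetric positive semidefinite
   square root (so that the square root of 1 is 1) *)
Definition psd_sqrt (R : realType) (n : nat) (A : 'M[R]_n) : 'M[R]_n :=
  xget 0 [set B | B^T = B /\ psd B /\ B *m B = A].

Definition var_invsqrt (R : realType) (n : nat) (Sigma : 'M[R]_n) : 'M[R]_n :=
  diag_mx (\row_i (Num.sqrt (Sigma i i))^-1).

Definition corrmx (R : realType) (n : nat) (Sigma : 'M[R]_n) : 'M[R]_n :=
  var_invsqrt Sigma *m Sigma *m var_invsqrt Sigma.

Definition zcacor_W (R : realType) (n : nat) (Sigma : 'M[R]_n) : 'M[R]_n :=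
  invmx (psd_sqrt (corrmx Sigma)) *m var_invsqrt Sigma.

Definition divergence (R : realType) (n : nat)
  (D : (set (Rn R n) -> \bar R) -> (set (Rn R n) -> \bar R) -> \bar R)
  : Prop :=
  (forall mu nu : probability (Rn R n) R, (0 <= D mu nu)%E) /\
  (forall mu : probability (Rn R n) R, D mu mu = 0%E).

Definition zolotarev_ideal (R : realType) (n : nat)
  (D : (set (Rn R n) -> \bar R) -> (set (Rn R n) -> \bar R) -> \bar R)
  : Prop :=
  (forall (d1 : measure_display) (O1 : measurableType d1)
          (P1 : probability O1 R) (X Z : O1 -> Rn R n)
          (d2 : measure_display) (O2 : measurableType d2)
          (P2 : probability O2 R) (Y W : O2 -> Rn R n),
      measurable_fun setT X -> measurable_fun setT Z ->
      measurable_fun setT Y -> measurable_fun setT W ->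
      indep P1 X Z -> indep P2 Y W ->
      (D (law P1 (fun w => vadd (X w) (Z w)))
         (law P2 (fun w => vadd (Y w) (W w)))
       <= D (law P1 X) (law P2 Y) + D (law P1 Z) (law P2 W))%E) /\
  (forall (mu nu : probability (Rn R n) R) (c : R),
      D (pushforward mu (vscale c))
        (pushforward nu (vscale c))
      = (`|c|%:E * D mu nu)%E).

From Pilot Require Import Defs.
From HB Require Import structures.
From mathcomp Require Import all_boot all_order all_algebra.
From mathcomp Require Import all_classical all_reals all_analysis.
From mathcomp Require Import measurable_realfun lra.
Set Implicit Arguments.
Unset Strict Implicit.
Unset Printing Implicit Defensive.
Import Order.TTheory GRing.Theory Num.Theory.
Import numFieldNormedType.Exports.
Local Open Scope classical_set_scope.
Local Open Scope ring_scope.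

(* Both whitening maps send a scalar covariance [a I] to [a^(-1/2) I]: for
   ZCA-cor the correlation matrix is then [I], whose only positive semidefinite
   square root is [I]; for Cholesky, a lower triangular factor of a scalar
   matrix with positive diagonal is itself scalar.  So [S] fixes the laws with
   identity covariance, while [X + Z], of covariance [2 I] by independence, is
   whitened to [(X + Z) / sqrt 2].  Homogeneity, nonnegativity and
   subadditivity of [D] then give
   D_S(X+Z, Y+W) = D(X+Z, Y+W) / sqrt 2 <= D(X+Z, Y+W) <= D(X,Y) + D(Z,W),
   and the right-hand side is D_S(X,Y) + D_S(Z,W). *)

Section scalar_whitening.
Variables (R : realType) (n : nat).

Lemma mulmx_trmx_ge0 (w : 'rV[R]_n) : 0 <= (w *m w^T) ord0 ord0.
Proof.
by rewrite mxE; apply: sumr_ge0 => j _; rewrite mxE -expr2 sqr_ge0.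
Qed.

Lemma mulmx_trmx_eq0 (w : 'rV[R]_n) : ((w *m w^T) ord0 ord0 == 0) = (w == 0).
Proof.
apply/idP/eqP => [|->]; last by rewrite mul0mx mxE.
rewrite mxE psumr_eq0 => [/allP w0|j _]; last by rewrite mxE -expr2 sqr_ge0.
apply/rowP => j; apply/eqP; rewrite mxE -sqrf_eq0.
by have := w0 j (mem_index_enum _); rewrite mxE expr2.
Qed.

(* If [B^2 = 1], every [w = v (B - 1)] satisfies [w B = -w], and positivity of
   [B] forces [w w^T <= 0]. *)
Lemma psd_sqr1_eq1 (B : 'M[R]_n) : psd B -> B *m B = 1%:M -> B = 1%:M.
Proof.
move=> psdB BB; apply/row_matrixP => i; rewrite !rowE mulmx1.
apply/eqP; rewrite -subr_eq0 -[X in _ - X]mulmx1 -mulmxBr; set w := _ *m _.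
have wB : w *m B = - w by rewrite -mulmxA mulmxBl BB mul1mx -opprB mulmxN.
have := psdB w; rewrite wB mulNmx mxE oppr_ge0 => w_le0.
by rewrite -mulmx_trmx_eq0 eq_le w_le0 mulmx_trmx_ge0.
Qed.

Lemma psd_sqrt1 : psd_sqrt (1%:M : 'M[R]_n) = 1%:M.
Proof.
have /(xgetPex 0)[_ [psdB BB]] :
    exists B : 'M[R]_n, B^T = B /\ psd B /\ B *m B = 1%:M.
  exists 1%:M; rewrite trmx1 mulmx1; split=> //; split=> // v.
  by rewrite mulmx1 mulmx_trmx_ge0.
exact: psd_sqr1_eq1.
Qed.

Lemma lower_triangular_scalar_factor (L : 'M[R]_n) (c : R) :
  lower_triangular L -> (forall i, 0 < L i i) -> 0 <= c ->
  L *m L^T = (c ^+ 2)%:M -> L = c%:M.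
Proof.
move=> Ltri Lpos c_ge0 LLT.
(* Column by column: once row [k] vanishes off the diagonal,
   [(L L^T) i k = L i k * L k k], so column [k] does too. *)
have offdiag0 m (i k : 'I_n) : (k < m)%N -> i != k -> L i k = 0.
  elim: m i k => // m IH i k; rewrite ltnS => km ik.
  have rowk j : j != k -> L k j = 0.
    move=> jk; have [jk'|kj] := ltnP j k.
      by apply: IH; [exact: leq_trans jk' km | rewrite eq_sym].
    by apply: Ltri; rewrite ltn_neqAle kj andbT eq_sym.
  have : (L *m L^T) i k = L i k * L k k.
    rewrite mxE (bigD1 k) //= big1 ?addr0; first by rewrite mxE.
    by move=> j jk; rewrite mxE rowk ?mulr0.
  rewrite LLT mxE (negbTE ik) mulr0n => /esym/eqP.
  by rewrite mulf_eq0 (gt_eqF (Lpos k)) orbF => /eqP.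
apply/matrixP => i j; rewrite mxE.
have [<-|ij] := eqVneq i j; last by rewrite (offdiag0 n) ?ltn_ord.
have : (L *m L^T) i i = L i i ^+ 2.
  rewrite mxE (bigD1 i) //= big1 ?addr0; first by rewrite mxE expr2.
  by move=> k ki; rewrite mxE (offdiag0 n) ?ltn_ord ?mul0r // eq_sym.
by rewrite LLT mxE eqxx => /eqP; rewrite eq_sym eqrXn2 ?(ltW (Lpos i)) // => /eqP <-.
Qed.

Lemma cholesky_W_scalar (a : R) :
  0 < a -> cholesky_W (a%:M : 'M[R]_n) = (Num.sqrt a)^-1%:M.
Proof.
move=> a_gt0; set c := (Num.sqrt a)^-1.
have c_gt0 : 0 < c by rewrite invr_gt0 sqrtr_gt0.
have c2 : invmx (a%:M : 'M[R]_n) = (c ^+ 2)%:M.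
  by rewrite invmx_scalar /c exprVn sqr_sqrtr ?ltW.
have /(xgetPex 0)[Ltri [Lpos LLT]] : exists L : 'M[R]_n, is_chol_factor a%:M L.
  exists c%:M; split; first by move=> i j /ltn_eqF ij; rewrite mxE -val_eqE /= ij.
  by rewrite c2 tr_scalar_mx -scalar_mxM -expr2; split=> // i; rewrite mxE eqxx.
by rewrite /cholesky_W (lower_triangular_scalar_factor Ltri Lpos (ltW c_gt0)) -?c2
  ?tr_scalar_mx.
Qed.

Lemma zcacor_W_scalar (a : R) :
  0 < a -> zcacor_W (a%:M : 'M[R]_n) = (Num.sqrt a)^-1%:M.
Proof.
move=> a_gt0.
have Va : var_invsqrt (a%:M : 'M[R]_n) = (Num.sqrt a)^-1%:M.
  by apply/matrixP => i j; rewrite !mxE eqxx mulr1n.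
have Pa : corrmx (a%:M : 'M[R]_n) = 1%:M.
  rewrite /corrmx Va -!scalar_mxM mulrAC -expr2 exprVn sqr_sqrtr ?ltW //.
  by rewrite mulVf // gt_eqF.
by rewrite /zcacor_W Pa psd_sqrt1 invmx1 mul1mx Va.
Qed.

Lemma whitening_scalar (S : 'M[R]_n -> 'M[R]_n) (a : R) :
  S = @zcacor_W R n \/ S = @cholesky_W R n -> 0 < a ->
  S a%:M = (Num.sqrt a)^-1%:M.
Proof. by case=> -> a_gt0; [exact: zcacor_W_scalar | exact: cholesky_W_scalar]. Qed.

End scalar_whitening.

Section Rn_measurability.
Variables (R : realType) (n : nat).
Local Notation coord := (@Defs.coord R n).

Lemma measurable_coord (i : 'I_n) : measurable_fun setT (coord i).
Proof.
apply: (measurability _ (RGenOpens.measurableE R)) => _ [_ [a [b ->]] <-].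
rewrite setTI; apply: sub_sigma_algebra; apply: open_comp; last exact: interval_open.
by move=> x _; exact: coord_continuous.
Qed.

(* Balls with rational centre and radius: a countable base of the topology. *)
Definition rat_ball (p : {ffun 'I_n -> rat} * rat) : set 'rV[R]_n :=
  @ball _ 'rV[R]_n (\row_j ratr (p.1 j)) (ratr p.2).

Lemma open_bigcup_rat_ball (U : set 'rV[R]_n) : open U ->
  U = \bigcup_(p in [set p | rat_ball p `<=` U]) rat_ball p.
Proof.
move=> oU; apply/seteqP; split => [x Ux|x [p /= pU]]; last exact: pU.
have /nbhs_ballP[e /= e_gt0 xeU] := oU _ Ux.
have [r] : exists r : rat, ratr r \in `]0, e / 2[ by apply: rat_in_itvoo; lra.
rewrite in_itv /= => /andP[r_gt0 r_lt].
have /choice[q qx] j : exists q : rat, ratr q \in `]x ord0 j - ratr r, x ord0 j + ratr r[.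
  by apply: rat_in_itvoo; lra.
have xq : rat_ball ([ffun j => q j], r) x.
  rewrite /rat_ball /ball /=; split => // i j.
  rewrite (ord1 i) -ball_normE /= ltr_distlC !mxE ffunE.
  by move: (qx j); rewrite in_itv /= => /andP[? ?]; apply/andP; split; lra.
exists ([ffun j => q j], r) => // y qy; apply: xeU.
apply: (@le_ball _ _ _ (ratr r + ratr r)); first lra.
exact: ball_triangle (ball_sym xq) qy.
Qed.

Lemma rV_ball_bigcap (c : 'rV[R]_n) (r : R) : 0 < r ->
  ball c r = \bigcap_j (coord j @^-1` ball (c ord0 j) r).
Proof.
move=> r_gt0; apply/seteqP; split => [x [_ cx] j _|x cx]; first exact: cx.
by split => // i j; rewrite (ord1 i); exact: cx.
Qed.

Lemma measurable_fun_Rn d (T : measurableType d) (f : T -> Rn R n) :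
  (forall i, measurable_fun setT (coord i \o f)) -> measurable_fun setT f.
Proof.
move=> mf; apply: (measurability _ (erefl : @measurable _ (Rn R n) = _)).
move=> _ [U /open_bigcup_rat_ball -> <-]; rewrite setTI preimage_bigcup bigcup_mkcond.
apply: countable_bigcupT_measurable => // p; case: ifP => // _.
have [r_gt0|r_le0] := ltP 0 (ratr p.2 : R); last first.
  suff -> : rat_ball p = set0 by rewrite preimage_set0.
  by apply/seteqP; split => // x; rewrite /rat_ball /ball /= => -[]; rewrite ltNge r_le0.
rewrite /rat_ball rV_ball_bigcap // preimage_bigcap.
apply: fin_bigcap_measurable => [|j _]; first exact: finite_finset.
rewrite -[X in measurable X]setTI; apply: mf => //.
by rewrite ball_itv; exact: measurable_itv.
Qed.

Lemma coord_vadd (i : 'I_n) (x y : Rn R n) :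
  coord i (vadd x y) = coord i x + coord i y.
Proof. by rewrite /Defs.coord /vadd mxE. Qed.

Lemma measurable_vadd d (T : measurableType d) (X Z : T -> Rn R n) :
  measurable_fun setT X -> measurable_fun setT Z ->
  measurable_fun setT (fun w => vadd (X w) (Z w)).
Proof.
move=> mX mZ; apply: measurable_fun_Rn => i.
rewrite (_ : _ \o _ = (coord i \o X) \+ (coord i \o Z)).
  by apply: measurable_funD; apply: measurableT_comp (measurable_coord i) _.
by apply/funext => w /=; rewrite coord_vadd.
Qed.

End Rn_measurability.

Lemma integrable_sqr_Lfun2 d (T : measurableType d) (R : realType)
    (mu : {measure set T -> \bar R}) (f : T -> R) : measurable_fun setT f ->
  mu.-integrable setT (EFin \o (fun x => f x ^+ 2)) -> f \in Lfun mu 2%:E.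
Proof.
move=> mf /integrableP[_ f2fin]; rewrite inE; apply/andP; split; rewrite inE //=.
rewrite /finite_norm unlock poweR_lty //.
by under eq_integral => x _ do rewrite /= powR_mulrn // -normrX -abse_EFin.
Qed.

Section independence.
Local Open Scope ereal_scope.
Context d (O : measurableType d) (R : realType) (P : probability O R).

Lemma expectationM_indep (U V : O -> R) :
  measurable_fun setT U -> measurable_fun setT V ->
  (forall A B, measurable A -> measurable B ->
     P (U @^-1` A `&` V @^-1` B) = P (U @^-1` A) * P (V @^-1` B)) ->
  U \in Lfun P 1 -> V \in Lfun P 1 -> (U * V)%R \in Lfun P 1 ->
  'E_P[U * V] = 'E_P[U] * 'E_P[V].
Proof.
move=> mU mV UV /Lfun1_integrable iU /Lfun1_integrable iV /Lfun1_integrable iUV.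
have mUV : measurable_fun setT (fun w => (U w, V w)) by exact: measurable_fun_pair.
pose mu := distribution P (mfun_Sub (mem_set mU)).
pose nu := distribution P (mfun_Sub (mem_set mV)).
pose J := pushforward P (fun w => (U w, V w)).
have muJ A : measurable A -> (mu \x nu) A = J A by apply: product_measure_unique.
pose f (p : R * R) := (p.1 * p.2)%:E.
have mf : measurable_fun setT f.
  by apply/measurable_EFinP; apply: measurable_funM.
have iJ : J.-integrable setT f by exact: (integrable_pushforward mUV).
have imu : mu.-integrable setT EFin by exact: (integrable_pushforward mU).
have inu : nu.-integrable setT EFin by exact: (integrable_pushforward mV).
have iprod : (mu \x nu).-integrable setT f.
  apply/integrableP; split => //; rewrite (eq_measure_integral J) => [|A mA _].
    by case/integrableP: iJ.
  exact: muJ.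
have -> : 'E_P[U * V] = \int[J]_p f p by rewrite unlock (integral_pushforward mUV).
have -> : 'E_P[U] = \int[mu]_x x%:E by rewrite unlock (integral_pushforward mU).
have -> : 'E_P[V] = \int[nu]_y y%:E by rewrite unlock (integral_pushforward mV).
rewrite (eq_measure_integral (mu \x nu)) => [|A mA _]; last exact/esym/muJ.
rewrite -(integral12_prod_meas1 iprod) /fubini_F /f /=.
have nu_fin : \int[nu]_y y%:E \is a fin_num by exact: integrable_fin_num.
transitivity (\int[mu]_x (x * fine (\int[nu]_y y%:E))%:E).
  apply: eq_integral => x _; under eq_integral do rewrite EFinM.
  by rewrite integralZl //= EFinM fineK.
by under eq_integral do rewrite EFinM; rewrite integralZr // fineK.
Qed.

Lemma covariance_indep (U V : O -> R) :
  measurable_fun setT U -> measurable_fun setT V ->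
  (forall A B, measurable A -> measurable B ->
     P (U @^-1` A `&` V @^-1` B) = P (U @^-1` A) * P (V @^-1` B)) ->
  U \in Lfun P 2%:E -> V \in Lfun P 2%:E -> covariance P U V = 0.
Proof.
move=> mU mV UV U2 V2.
have Pfin : P setT \is a fin_num := fin_num_measure P _ measurableT.
have [U1 V1] := (Lfun_subset12 Pfin U2, Lfun_subset12 Pfin V2).
have UV1 := Lfun2_mul_Lfun1 U2 V2.
by rewrite covarianceE // expectationM_indep // subee // fin_numM ?expectation_fin_num.
Qed.

End independence.

Section law_covariance.
Context (R : realType) (n : nat) d (O : measurableType d) (P : probability O R).
Local Notation coord := (@Defs.coord R n).

Lemma integrable_law (X : O -> Rn R n) (g : Rn R n -> R) :
  measurable_fun setT X -> measurable_fun setT g ->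
  (law P X).-integrable setT (EFin \o g) -> P.-integrable setT (EFin \o (g \o X)).
Proof.
move=> mX mg /integrableP[_ gfin]; apply/integrableP; split.
  exact/measurable_EFinP/measurableT_comp.
move: gfin; rewrite /law (ge0_integral_pushforward mX) //.
exact/measurableT_comp/measurable_EFinP.
Qed.

Lemma Rexp_law (X : O -> Rn R n) (g : Rn R n -> R) :
  measurable_fun setT X -> measurable_fun setT g ->
  P.-integrable setT (EFin \o (g \o X)) -> Rexp (law P X) g = fine 'E_P[g \o X].
Proof.
move=> mX mg ig; rewrite /Rexp /law unlock (integral_pushforward mX) //.
exact/measurable_EFinP.
Qed.

Lemma covmx_law (X : O -> Rn R n) : measurable_fun setT X ->
  (forall i, coord i \o X \in Lfun P 2%:E) ->
  covmx (law P X) = \matrix_(i, j) fine (covariance P (coord i \o X) (coord j \o X)).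
Proof.
move=> mX X2; apply/matrixP => i j; rewrite !mxE.
have Pfin : P setT \is a fin_num := fin_num_measure P _ measurableT.
have X1 k : coord k \o X \in Lfun P 1 := Lfun_subset12 Pfin (X2 k).
have XX1 := Lfun2_mul_Lfun1 (X2 i) (X2 j).
rewrite covarianceE // fineD ?fineN ?fineM ?fin_numN ?fin_numM ?expectation_fin_num //.
rewrite !Rexp_law //; try exact/Lfun1_integrable; try exact: measurable_coord.
by apply: measurable_funM; exact: measurable_coord.
Qed.

Lemma law_coord_Lfun2 (X : O -> Rn R n) (i : 'I_n) : measurable_fun setT X ->
  (law P X).-integrable setT (fun x => (coord i x ^+ 2)%:E) ->
  coord i \o X \in Lfun P 2%:E.
Proof.
move=> mX i2; apply: integrable_sqr_Lfun2.
  exact: measurableT_comp (measurable_coord i) mX.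
have mg : measurable_fun setT (fun x => coord i x ^+ 2).
  exact: measurable_funX (measurable_coord i).
exact: (integrable_law mX mg i2).
Qed.

Lemma covariance_coord_indep (X Z : O -> Rn R n) (i j : 'I_n) :
  measurable_fun setT X -> measurable_fun setT Z -> indep P X Z ->
  coord i \o X \in Lfun P 2%:E -> coord j \o Z \in Lfun P 2%:E ->
  covariance P (coord i \o X) (coord j \o Z) = 0%E.
Proof.
move=> mX mZ iXZ Xi2 Zj2.
apply: (covariance_indep _ _ _ Xi2 Zj2); try exact: measurableT_comp (measurable_coord _) _.
move=> A B mA mB; apply: (iXZ (coord i @^-1` A) (coord j @^-1` B));
  by rewrite -[X in measurable X]setTI; exact: measurable_coord.
Qed.

Lemma covmx_law_vadd_indep (X Z : O -> Rn R n) :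
  measurable_fun setT X -> measurable_fun setT Z ->
  (forall i, coord i \o X \in Lfun P 2%:E) -> (forall i, coord i \o Z \in Lfun P 2%:E) ->
  indep P X Z ->
  covmx (law P (fun w => vadd (X w) (Z w))) = covmx (law P X) + covmx (law P Z).
Proof.
move=> mX mZ X2 Z2 iXZ.
have coord_sum k :
    coord k \o (fun w => vadd (X w) (Z w)) = (coord k \o X) \+ (coord k \o Z).
  by apply/funext => w; exact: coord_vadd.
have XZ2 k : coord k \o (fun w => vadd (X w) (Z w)) \in Lfun P 2%:E.
  by rewrite coord_sum rpredD ?lee1n.
have Pfin : P setT \is a fin_num := fin_num_measure P _ measurableT.
have cov_fin U V :
    U \in Lfun P 2%:E -> V \in Lfun P 2%:E -> covariance P U V \is a fin_num.
  move=> U2 V2; have [U1 V1] := (Lfun_subset12 Pfin U2, Lfun_subset12 Pfin V2).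
  exact: covariance_fin_num U1 V1 (Lfun2_mul_Lfun1 U2 V2).
rewrite !covmx_law //; last exact: measurable_vadd.
apply/matrixP => i j; rewrite !mxE !coord_sum.
rewrite covarianceDl ?rpredD ?lee1n // !covarianceDr //.
rewrite (covariance_coord_indep mX mZ iXZ (X2 i) (Z2 j)) (covarianceC P (coord i \o Z)).
rewrite (covariance_coord_indep mX mZ iXZ (X2 j) (Z2 i)) adde0 add0e fineD //.
all: exact: cov_fin.
Qed.

End law_covariance.

Lemma covmx_law_vadd_identity_cov (R : realType) (n : nat) d (O : measurableType d)
    (P : probability O R) (X Z : O -> Rn R n) :
  measurable_fun setT X -> measurable_fun setT Z ->
  identity_cov (law P X) -> identity_cov (law P Z) -> indep P X Z ->
  covmx (law P (fun w => vadd (X w) (Z w))) = 2%:M.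
Proof.
move=> mX mZ [X2 X1] [Z2 Z1] iXZ.
rewrite covmx_law_vadd_indep // => [|i|i]; try exact: law_coord_Lfun2.
by rewrite X1 Z1; apply/matrixP => i j; rewrite !mxE -mulrnDl.
Qed.

Section whitening_laws.
Variables (R : realType) (n : nat) (S : 'M[R]_n -> 'M[R]_n).
Hypothesis hS : S = @zcacor_W R n \/ S = @cholesky_W R n.

Lemma whiten_scalar_cov (mu : set (Rn R n) -> \bar R) (a : R) :
  0 < a -> covmx mu = a%:M -> whiten S mu = pushforward mu (vscale (Num.sqrt a)^-1).
Proof.
move=> a_gt0 mu_a; rewrite /whiten mu_a (whitening_scalar hS a_gt0).
congr pushforward; apply/funext => x.
by rewrite /linmap /vscale tr_scalar_mx mul_mx_scalar.
Qed.

Lemma whiten_identity_cov (mu : set (Rn R n) -> \bar R) :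
  identity_cov mu -> whiten S mu = mu.
Proof.
case=> _ mu1; rewrite (whiten_scalar_cov ltr01 mu1) sqrtr1 invr1.
apply/funext => A; rewrite /pushforward; congr mu.
by apply/funext => x; rewrite /preimage /vscale /= scale1r.
Qed.

End whitening_laws.

Theorem mainTheorem11 (R : realType) (n : nat)
  (S : 'M[R]_n -> 'M[R]_n)
  (hS : S = @zcacor_W R n \/ S = @cholesky_W R n)
  (D : (set (Rn R n) -> \bar R) -> (set (Rn R n) -> \bar R) -> \bar R)
  (hDdiv : divergence D) (hDideal : zolotarev_ideal D)
  (d1 : measure_display) (O1 : measurableType d1) (P1 : probability O1 R)
  (X Z : O1 -> Rn R n)
  (d2 : measure_display) (O2 : measurableType d2) (P2 : probability O2 R)
  (Y W : O2 -> Rn R n)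
  (mX : measurable_fun setT X) (mZ : measurable_fun setT Z)
  (mY : measurable_fun setT Y) (mW : measurable_fun setT W)
  (cX : identity_cov (law P1 X)) (cZ : identity_cov (law P1 Z))
  (cY : identity_cov (law P2 Y)) (cW : identity_cov (law P2 W))
  (iXZ : indep P1 X Z) (iYW : indep P2 Y W) :
  (DS S D (law P1 (fun w => vadd (X w) (Z w)))
          (law P2 (fun w => vadd (Y w) (W w)))
   <= DS S D (law P1 X) (law P2 Y) + DS S D (law P1 Z) (law P2 W))%E.
Proof.
rewrite /DS !(whiten_scalar_cov hS _ (covmx_law_vadd_identity_cov _ _ _ _ _)) //.
rewrite !(whiten_identity_cov hS) //.
set c := (Num.sqrt 2)^-1.
(* [law P1 (X + Z)] and [law P2 (Y + W)], seen as probability measures. *)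
pose mu := distribution P1 (mfun_Sub (mem_set (measurable_vadd mX mZ))).
pose nu := distribution P2 (mfun_Sub (mem_set (measurable_vadd mY mW))).
have -> : D (pushforward mu (vscale c)) (pushforward nu (vscale c)) = (`|c|%:E * D mu nu)%E.
  exact: hDideal.2.
apply: le_trans (hDideal.1 _ _ P1 X Z _ _ P2 Y W mX mZ mY mW iXZ iYW).
apply: gee_pMl => //; first exact: hDdiv.1 mu nu.
rewrite lee_fin ger0_norm ?invr_ge0 ?sqrtr_ge0 // invf_le1 ?sqrtr_gt0 //.
by rewrite -[leLHS]sqrtr1 ler_sqrt ?ler1n.
Qed.
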